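(* Let $L$ be a finite-dimensional Lie superalgebra, let $r,s$ be factor sets on $L$, and put $R=(Z(L),L/Z(L),r)$, $S=(Z(L),L/Z(L),s)$, $Z_R=\{(x,0)\in R\}$, $Z_S=\{(x,0)\in S\}$. (1) Let $\lambda:R\to S$ be a Lie superalgebra isomorphism with $\lambda(Z_R)=Z_S$, and let $\mu\in\mathrm{Aut}(L/Z(L))$, $\nu\in\mathrm{Aut}(Z(L))$ be the automorphisms induced by $\lambda$, i.e. $\lambda(0,\bar a)+Z_S=(0,\mu(\bar a))+Z_S$ and $\lambda(x,0)=(\nu(x),0)$ for all $\bar a\in L/Z(L)$, $x\in Z(L)$. Then there exists an even linear map $\gamma:L/Z(L)\to Z(L)$ such that $\nu\big(r(\bar a,\bar b)+\gamma([\bar a,\bar b])\big)=s(\mu(\bar a),\mu(\bar b))$ for all $\bar a,\bar b\in L/Z(L)$. (2) Conversely, if $\mu\in\mathrm{Aut}(L/Z(L))$, $\nu\in\mathrm{Aut}(Z(L))$ and $\delta:L/Z(L)\to Z(L)$ is an even linear map such that $\nu\big(r(\bar a,\bar b)+\delta([\bar a,\bar b])\big)=s(\mu(\bar a),\mu(\bar b))$ for all $\bar a,\bar b$, then there exists a Lie superalgebra isomorphism $\lambda:R\to S$ induced by $\mu$ and $\nu$ (in the sense of (1)) with $\lambda(Z_R)=Z_S$.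
   Context: Lie superalgebras over a field of characteristic $\neq 2,3$; homomorphisms and ''even linear maps'' are degree-preserving. $Z(L)$ is the center. A factor set on $L$ is a bilinear map $r:L/Z(L)\times L/Z(L)\to Z(L)$ with, for homogeneous $\bar a,\bar b,\bar c$: $r(\bar a,\bar b)\in Z(L)_{|\bar a|+|\bar b|}$; $r(\bar a,\bar b)=-(-1)^{|\bar a||\bar b|}r(\bar b,\bar a)$; $r([\bar a,\bar b],\bar c)=r(\bar a,[\bar b,\bar c])-(-1)^{|\bar a||\bar b|}r(\bar b,[\bar a,\bar c])$. For a factor set $r$, $(Z(L),L/Z(L),r)$ is the Lie superalgebra of pairs $(x,\bar a)$, $x\in Z(L)$, $\bar a\in L/Z(L)$, graded componentwise, with componentwise addition and bracket $[(x_1,\bar a),(x_2,\bar b)]=(r(\bar a,\bar b),[\bar a,\bar b])$. *)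

From HB Require Import structures.
From mathcomp Require Import all_boot all_order all_algebra.
Set Implicit Arguments. Unset Strict Implicit. Unset Printing Implicit Defensive.
Import GRing.Theory.
Local Open Scope ring_scope.

(* Parity is a bool: false = even (degree 0), true = odd (degree 1).
   A graded vector space is an lmodType V with a predicate
   [par i v] meaning "v is homogeneous of degree i", i.e. v \in V_i. *)

Section Defs.
Variable K : fieldType.

Definition ssign (i j : bool) : K := (-1) ^+ (i && j).

Definition lin (U V : lmodType K) (f : U -> V) : Prop :=
  forall (a : K) (u v : U), f (a *: u + v) = a *: f u + f v.

Definition bilin (U V W : lmodType K) (f : U -> V -> W) : Prop :=
  (forall v, lin (fun u => f u v)) /\ (forall u, lin (f u)).

Definition grading (V : lmodType K) (par : bool -> V -> Prop) : Prop :=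
  [/\ forall i, par i 0,
      forall i (a : K) u v, par i u -> par i v -> par i (a *: u + v),
      forall v, par false v -> par true v -> v = 0
    & forall v, exists v0 v1, [/\ par false v0, par true v1 & v = v0 + v1]].

Definition is_superLie (V : lmodType K) (par : bool -> V -> Prop)
    (br : V -> V -> V) : Prop :=
  [/\ grading par, bilin br,
      forall i j u v, par i u -> par j v -> par (i (+) j) (br u v),
      forall i j u v, par i u -> par j v -> br u v = - (ssign i j *: br v u)
    & forall i j k u v w, par i u -> par j v -> par k w ->
        br u (br v w) = br (br u v) w + ssign i j *: br v (br u w)].

Definition even_lin (U V : lmodType K) (parU : bool -> U -> Prop)
    (parV : bool -> V -> Prop) (f : U -> V) : Prop :=
  lin f /\ forall i u, parU i u -> parV i (f u).

Definition superLie_hom (U V : lmodType K) (parU : bool -> U -> Prop)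
    (brU : U -> U -> U) (parV : bool -> V -> Prop) (brV : V -> V -> V)
    (f : U -> V) : Prop :=
  even_lin parU parV f /\ forall u v, f (brU u v) = brV (f u) (f v).

Definition superLie_iso (U V : lmodType K) (parU : bool -> U -> Prop)
    (brU : U -> U -> U) (parV : bool -> V -> Prop) (brV : V -> V -> V)
    (f : U -> V) : Prop :=
  superLie_hom parU brU parV brV f /\ bijective f.

Definition center (V : lmodType K) (br : V -> V -> V) (x : V) : Prop :=
  forall y, br x y = 0.

(* [Z] (with grading parZ) together with iota : Z -> L is the center Z(L):
   iota is an injective linear map onto Z(L), and the grading of Z is
   the one induced from L. *)
Definition is_center_of (L : lmodType K) (parL : bool -> L -> Prop)
    (brL : L -> L -> L) (Z : lmodType K) (parZ : bool -> Z -> Prop)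
    (iota : Z -> L) : Prop :=
  [/\ lin iota, injective iota,
      forall x, center brL x <-> exists z, iota z = x
    & forall i z, parZ i z <-> parL i (iota z)].

(* [Q] (with grading parQ, bracket brQ) together with pi : L -> Q is the
   quotient L/Z(L): pi is a surjective Lie superalgebra homomorphism whose
   kernel is Z(L); Q is a Lie superalgebra. *)
Definition is_quotient_by_center (L : lmodType K) (parL : bool -> L -> Prop)
    (brL : L -> L -> L) (Q : lmodType K) (parQ : bool -> Q -> Prop)
    (brQ : Q -> Q -> Q) (pi : L -> Q) : Prop :=
  [/\ is_superLie parQ brQ, superLie_hom parL brL parQ brQ pi,
      forall q, exists x, pi x = q
    & forall x, pi x = 0 <-> center brL x].

Definition factor_set (Q : lmodType K) (parQ : bool -> Q -> Prop)
    (brQ : Q -> Q -> Q) (Z : lmodType K) (parZ : bool -> Z -> Prop)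
    (r : Q -> Q -> Z) : Prop :=
  [/\ bilin r,
      forall i j a b, parQ i a -> parQ j b -> parZ (i (+) j) (r a b),
      forall i j a b, parQ i a -> parQ j b -> r a b = - (ssign i j *: r b a)
    & forall i j k a b c, parQ i a -> parQ j b -> parQ k c ->
        r (brQ a b) c = r a (brQ b c) - ssign i j *: r b (brQ a c)].

(* The Lie superalgebra (Z(L), L/Z(L), r): pairs (x, a), graded
   componentwise, bracket [(x1,a),(x2,b)] = (r(a,b), [a,b]). *)
Definition pair_par (Z Q : lmodType K) (parZ : bool -> Z -> Prop)
    (parQ : bool -> Q -> Prop) (i : bool) (p : (Z * Q)%type) : Prop :=
  parZ i p.1 /\ parQ i p.2.

Definition pair_br (Z Q : lmodType K) (brQ : Q -> Q -> Q) (r : Q -> Q -> Z)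
    (p1 p2 : (Z * Q)%type) : (Z * Q)%type :=
  (r p1.2 p2.2, brQ p1.2 p2.2).

End Defs.

From HB Require Import structures.
From mathcomp Require Import all_boot all_order all_algebra.
Import GRing.Theory.
Local Open Scope ring_scope.

(* For (1), the Z(L)-component of lambda (0, a) is nu (gamma a); comparing the
   first components of lambda [(0, a), (0, b)] = [lambda (0, a), lambda (0, b)]
   gives the relation, and gamma is even because Z(L) is a graded subspace of
   L.  For (2), lambda (x, a) := (nu (x + delta a), mu a) is an isomorphism
   with inverse (y, c) |-> (nu^-1 y - delta (mu^-1 c), mu^-1 c). *)

Set Implicit Arguments. Unset Strict Implicit. Unset Printing Implicit Defensive.

Section LinearMaps.
Variable K : fieldType.

Lemma linD (U V : lmodType K) (f : U -> V) : lin f -> {morph f : u v / u + v}.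
Proof. by move=> /GRing.semilinear_linear[]. Qed.

Lemma lin0 (U V : lmodType K) (f : U -> V) : lin f -> f 0 = 0.
Proof. by move=> /GRing.semilinear_linear/GRing.nmod_morphism_semilinear[]. Qed.

Lemma lin_comp (U V W : lmodType K) (f : U -> V) (g : V -> W) :
  lin f -> lin g -> lin (g \o f).
Proof. by move=> lf lg a u v; rewrite /= lf lg. Qed.

Lemma lin_can (U V : lmodType K) (f : U -> V) (g : V -> U) :
  lin f -> cancel f g -> cancel g f -> lin g.
Proof. by move=> lf fK gK a u v; apply: (can_inj fK); rewrite lf !gK. Qed.

Lemma even_lin_comp (U V W : lmodType K) (parU : bool -> U -> Prop)
    (parV : bool -> V -> Prop) (parW : bool -> W -> Prop) (f : U -> V) (g : V -> W) :
  even_lin parU parV f -> even_lin parV parW g -> even_lin parU parW (g \o f).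
Proof.
by move=> [lf ef] [lg eg]; split=> [|i u /ef /eg //]; apply: lin_comp.
Qed.

End LinearMaps.

Section Grading.
Variables (K : fieldType) (V : lmodType K) (par : bool -> V -> Prop).
Hypothesis grV : grading par.

Lemma grading0 i : par i 0.
Proof. by case: grV. Qed.

Lemma gradingD i u v : par i u -> par i v -> par i (u + v).
Proof. by case: grV => _ comb _ _ pu pv; rewrite -[u]scale1r; apply: comb. Qed.

Lemma gradingN i u : par i u -> par i (- u).
Proof.
case: grV => _ comb _ _ pu; rewrite -scaleN1r -[_ *: u]addr0.
by apply: comb => //; apply: grading0.
Qed.

Lemma grading_eq0 i v : par i v -> par (~~ i) v -> v = 0.
Proof. by case: grV => _ _ both _; case: i => /= pv pv'; apply: both. Qed.

Lemma grading_decomp i v : exists u w, [/\ par i u, par (~~ i) w & v = u + w].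
Proof.
case: grV => _ _ _ /(_ v) [v0 [v1 [p0 p1 ->]]].
by case: i; [exists v1, v0; rewrite addrC | exists v0, v1].
Qed.

Lemma grading_sum0 i u w : par i u -> par (~~ i) w -> u + w = 0 -> u = 0 /\ w = 0.
Proof.
move=> pu pw uw0; have u_def : u = - w by apply/eqP; rewrite -addr_eq0 uw0.
have u0 : u = 0 by apply: (grading_eq0 pu); rewrite u_def; apply: gradingN.
by split=> //; move: uw0; rewrite u0 add0r.
Qed.

End Grading.

Lemma even_lin_can (K : fieldType) (U V : lmodType K) (parU : bool -> U -> Prop)
    (parV : bool -> V -> Prop) (f : U -> V) (g : V -> U) :
  grading parU -> grading parV -> even_lin parU parV f ->
  cancel f g -> cancel g f -> even_lin parV parU g.
Proof.
move=> grU grV [lf ef] fK gK; have lg := lin_can lf fK gK.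
split=> // i y py; have [u [w [pu pw gy]]] := grading_decomp grU i (g y).
have fw_i : parV i (f w).
  have -> : f w = y - f u by rewrite -(gK y) gy linD // addrC addKr.
  by apply: (gradingD grV) => //; apply: (gradingN grV); apply: ef.
have fw0 : f w = 0 by apply: (grading_eq0 grV fw_i); apply: ef.
by rewrite gy -(fK w) fw0 (lin0 lg) addr0.
Qed.

Section Center.
Variables (K : fieldType) (L : lmodType K) (parL : bool -> L -> Prop) (brL : L -> L -> L).
Hypothesis HL : is_superLie parL brL.

Lemma center_homogeneous x :
  (forall j y, parL j y -> brL x y = 0) -> center brL x.
Proof.
case: HL => grL [_ brx] _ _ _ xy0 y.
have [y0 [y1 [p0 p1 ->]]] := grading_decomp grL false y.
by rewrite linD // (xy0 _ _ p0) (xy0 _ _ p1) addr0.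
Qed.

Lemma center_components v v0 v1 : center brL v ->
  parL false v0 -> parL true v1 -> v = v0 + v1 -> center brL v0 /\ center brL v1.
Proof.
case: HL => grL [bry _] brpar _ _ cv p0 p1 v_def.
suff xy0 j y : parL j y -> brL v0 y = 0 /\ brL v1 y = 0.
  by split; apply: center_homogeneous => j y /xy0[].
move=> py; apply: (grading_sum0 grL (brpar _ _ _ _ p0 py) (brpar _ _ _ _ p1 py)).
by rewrite -(linD (bry y)) -v_def cv.
Qed.

Lemma center_grading (Z : lmodType K) (parZ : bool -> Z -> Prop) (iota : Z -> L) :
  is_center_of parL brL parZ iota -> grading parZ.
Proof.
case=> li inj cent parZE; have grL : grading parL by case: HL.
split.
- by move=> i; apply/parZE; rewrite (lin0 li); apply: grading0.
- move=> i a u v /parZE pu /parZE pv; apply/parZE; rewrite li.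
  by case: grL => _ comb _ _; apply: comb.
- move=> z /parZE p0 /parZE p1; apply: inj.
  by rewrite (lin0 li) (grading_eq0 grL p0 p1).
- move=> z; have [v0 [v1 [p0 p1 z_def]]] := grading_decomp grL false (iota z).
  have cz : center brL (iota z) by apply/cent; exists z.
  have [/cent[z0 z0_def] /cent[z1 z1_def]] := center_components cz p0 p1 z_def.
  exists z0, z1; split; [apply/parZE; rewrite z0_def // | apply/parZE; rewrite z1_def // |].
  by apply: inj; rewrite linD // z0_def z1_def.
Qed.

End Center.

Section PairAlgebra.
Variables (K : fieldType) (Z Q : lmodType K).
Variables (parZ : bool -> Z -> Prop) (parQ : bool -> Q -> Prop) (brQ : Q -> Q -> Q).
Hypothesis grZ : grading parZ.
Implicit Types (r s : Q -> Q -> Z) (mu : Q -> Q) (nu : Z -> Z) (delta : Q -> Z).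

Local Notation pair_hom r s :=
  (superLie_hom (pair_par parZ parQ) (pair_br brQ r) (pair_par parZ parQ) (pair_br brQ s)).

Lemma pair_addE (x y : Z) (a b : Q) : (x, a) + (y, b) = (x + y, a + b).
Proof. by []. Qed.

Lemma pair_scaleE (k : K) (x : Z) (a : Q) : k *: (x, a) = (k *: x, k *: a).
Proof. by []. Qed.

Lemma even_lin_fst : even_lin (pair_par parZ parQ) parZ fst.
Proof. by split=> [a [x c] [y d] | i p []]. Qed.

Lemma even_lin_pair0 : even_lin parQ (pair_par parZ parQ) (pair 0).
Proof.
split=> [a u v | i c pc]; last by split=> //; apply: grading0.
by rewrite pair_scaleE pair_addE scaler0 addr0.
Qed.

Lemma pair_hom_factor_sets r s (lambda : Z * Q -> Z * Q) mu nu :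
  pair_hom r s lambda -> even_lin parZ parZ nu -> bijective nu ->
  (forall a, exists z, lambda (0, a) = (0, mu a) + (z, 0)) ->
  (forall x, lambda (x, 0) = (nu x, 0)) ->
  exists gamma, even_lin parQ parZ gamma /\
    forall a b, nu (r a b + gamma (brQ a b)) = s (mu a) (mu b).
Proof.
move=> [el brl] [lnu enu] [nuinv nuK nuinvK] lambda0a lambdax0.
exists (nuinv \o fst \o lambda \o pair 0); split.
  apply: even_lin_comp (even_lin_can grZ grZ (conj lnu enu) nuK nuinvK).
  exact: even_lin_comp (even_lin_comp even_lin_pair0 el) even_lin_fst.
move=> a b; rewrite /= linD // nuinvK.
have lambda0_snd c : (lambda (0, c)).2 = mu c by have [z ->] := lambda0a c; apply: addr0.
have := brl (0, a) (0, b); rewrite /pair_br /= !lambda0_snd.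
have -> : (r a b, brQ a b) = (r a b, 0) + (0, brQ a b) by rewrite pair_addE addr0 add0r.
by rewrite (linD el.1) lambdax0 => /(congr1 fst).
Qed.

Definition pair_twist mu nu delta (p : Z * Q) : Z * Q := (nu (p.1 + delta p.2), mu p.2).

Lemma even_lin_pair_twist mu nu delta :
  even_lin parQ parQ mu -> even_lin parZ parZ nu -> even_lin parQ parZ delta ->
  even_lin (pair_par parZ parQ) (pair_par parZ parQ) (pair_twist mu nu delta).
Proof.
move=> [lmu emu] [lnu enu] [ldelta edelta]; split.
  move=> a [x c] [y d]; rewrite /pair_twist !pair_scaleE !pair_addE /=.
  by rewrite lmu ldelta -lnu scalerDr addrACA.
move=> i [x c] [px pc]; split; last exact: emu.
by apply/enu/(gradingD grZ) => //; apply: edelta.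
Qed.

Lemma pair_twist_br r s mu nu delta :
  (forall a b, mu (brQ a b) = brQ (mu a) (mu b)) ->
  (forall a b, nu (r a b + delta (brQ a b)) = s (mu a) (mu b)) ->
  forall p q, pair_twist mu nu delta (pair_br brQ r p q)
            = pair_br brQ s (pair_twist mu nu delta p) (pair_twist mu nu delta q).
Proof. by move=> brmu rs [x a] [y b]; rewrite /pair_twist /pair_br /= rs brmu. Qed.

Lemma pair_twist_bij mu nu delta :
  bijective mu -> bijective nu -> bijective (pair_twist mu nu delta).
Proof.
move=> [muinv muK muinvK] [nuinv nuK nuinvK].
exists (fun p => (nuinv p.1 - delta (muinv p.2), muinv p.2)).
  by move=> [x a]; rewrite /pair_twist /= nuK muK addrK.
by move=> [y c]; rewrite /pair_twist /= muinvK subrK nuinvK.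
Qed.

Lemma pair_twist_iso r s mu nu delta :
  superLie_iso parQ brQ parQ brQ mu ->
  (even_lin parZ parZ nu /\ bijective nu) ->
  even_lin parQ parZ delta ->
  (forall a b, nu (r a b + delta (brQ a b)) = s (mu a) (mu b)) ->
  exists lambda : Z * Q -> Z * Q,
    [/\ superLie_iso (pair_par parZ parQ) (pair_br brQ r)
                     (pair_par parZ parQ) (pair_br brQ s) lambda,
        forall p, (exists x, lambda (x, 0) = p) <-> p.2 = 0,
        forall a, exists z, lambda (0, a) = (0, mu a) + (z, 0)
      & forall x, lambda (x, 0) = (nu x, 0)].
Proof.
move=> [[emu brmu] bijmu] [enu bijnu] edelta rs.
case: (emu) (enu) (edelta) => [lmu _] [lnu _] [ldelta _].
exists (pair_twist mu nu delta); split.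
- split; last exact: pair_twist_bij.
  by split; [apply: even_lin_pair_twist | apply: pair_twist_br].
- move=> [y c]; split; first by move=> [x [_ <-]]; rewrite (lin0 lmu).
  move=> /= ->; have [nuinv _ nuinvK] := bijnu.
  by exists (nuinv y); rewrite /pair_twist /= (lin0 ldelta) (lin0 lmu) addr0 nuinvK.
- by move=> a; exists (nu (delta a)); rewrite /pair_twist pair_addE /= !add0r addr0.
- by move=> x; rewrite /pair_twist /= (lin0 ldelta) (lin0 lmu) addr0.
Qed.

End PairAlgebra.

Theorem lemma3p5 (K : fieldType)
    (char2 : (2%:R : K) != 0) (char3 : (3%:R : K) != 0)
    (L : vectType K) (parL : bool -> L -> Prop) (brL : L -> L -> L)
    (HL : is_superLie parL brL)
    (Z : lmodType K) (parZ : bool -> Z -> Prop) (iota : Z -> L)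
    (HZ : is_center_of parL brL parZ iota)
    (Q : lmodType K) (parQ : bool -> Q -> Prop) (brQ : Q -> Q -> Q)
    (pi : L -> Q) (HQ : is_quotient_by_center parL brL parQ brQ pi)
    (r s : Q -> Q -> Z)
    (Hr : factor_set parQ brQ parZ r) (Hs : factor_set parQ brQ parZ s) :
  (* (1) *)
  (forall (lambda : (Z * Q)%type -> (Z * Q)%type) (mu : Q -> Q) (nu : Z -> Z),
     superLie_iso (pair_par parZ parQ) (pair_br brQ r)
                  (pair_par parZ parQ) (pair_br brQ s) lambda ->
     (forall p, (exists x, lambda (x, 0) = p) <-> p.2 = 0) ->
     superLie_iso parQ brQ parQ brQ mu ->
     (even_lin parZ parZ nu /\ bijective nu) ->
     (forall a : Q, exists z : Z, lambda (0, a) = (0, mu a) + (z, 0)) ->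
     (forall x : Z, lambda (x, 0) = (nu x, 0)) ->
     exists gamma : Q -> Z, even_lin parQ parZ gamma /\
       forall a b : Q, nu (r a b + gamma (brQ a b)) = s (mu a) (mu b)) /\
  (* (2) *)
  (forall (mu : Q -> Q) (nu : Z -> Z) (delta : Q -> Z),
     superLie_iso parQ brQ parQ brQ mu ->
     (even_lin parZ parZ nu /\ bijective nu) ->
     even_lin parQ parZ delta ->
     (forall a b : Q, nu (r a b + delta (brQ a b)) = s (mu a) (mu b)) ->
     exists lambda : (Z * Q)%type -> (Z * Q)%type,
       [/\ superLie_iso (pair_par parZ parQ) (pair_br brQ r)
                        (pair_par parZ parQ) (pair_br brQ s) lambda,
           forall p, (exists x, lambda (x, 0) = p) <-> p.2 = 0,
           forall a : Q, exists z : Z, lambda (0, a) = (0, mu a) + (z, 0)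
         & forall x : Z, lambda (x, 0) = (nu x, 0)]).
Proof.
have grZ := center_grading HL HZ.
split; last exact: pair_twist_iso.
move=> lambda mu nu [hom_lambda _] _ _ [enu bijnu].
exact: pair_hom_factor_sets.
Qed.
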